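(* Let $\Lambda\subseteq\Delta$ be a non-empty closed convex set. Assume there is $L\ge0$ such that for every $g\in\mathcal G_1$ the map $\lambda\mapsto D_{KL}(\hat{\mathsf p}_\lambda\,\|\,\pi_g)$ is finite-valued and $L$-Lipschitz on $\Delta$ with respect to $\|\cdot\|_1$. Let $V^*_\Delta=\inf_{g\in\mathcal G_1}\max_{\lambda\in\Delta}D_{KL}(\hat{\mathsf p}_\lambda\|\pi_g)$ and $V^*_\Lambda=\inf_{g\in\mathcal G_1}\max_{\lambda\in\Lambda}D_{KL}(\hat{\mathsf p}_\lambda\|\pi_g)$. Then $$0\le V^*_\Delta-V^*_\Lambda\le L\cdot d_H(\Lambda,\Delta),\qquad d_H(\Lambda,\Delta)=\max_{\lambda\in\Delta}\min_{\lambda'\in\Lambda}\|\lambda-\lambda'\|_1 .$$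
   Context: Fix an integer $p\ge 1$, $[1,p]=\{1,\dots,p\}$, $\Delta=\{\lambda\in\mathbb R^p:\lambda_k\ge 0,\ \sum_k\lambda_k=1\}$. Let $\hat{\mathsf p}_1,\dots,\hat{\mathsf p}_p$ be probability distributions with finite supports, $\mathcal X_0=\bigcup_k\mathrm{supp}(\hat{\mathsf p}_k)$, and $\hat\pi_1,\dots,\hat\pi_p$ probability distributions on $\mathcal X_0$. A gate is $g:\mathcal X_0\times[1,p]\to[0,1]$ with $\sum_kg(x,k)=1$ for each $x$; $\pi_g(x)=\sum_kg(x,k)\hat\pi_k(x)$, $Z_g=\sum_{x\in\mathcal X_0}\pi_g(x)$, $\mathcal G_1=\{g:Z_g=1\}$. For $\lambda\in\Delta$, $\hat{\mathsf p}_\lambda=\sum_k\lambda_k\hat{\mathsf p}_k$. $D_{KL}(P\|Q)=\sum_xP(x)\log\frac{P(x)}{Q(x)}\in[0,\infty]$ with conventions $0\log\frac0q=0$, $a\log\frac a0=+\infty$ for $a>0$. *)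

From mathcomp Require Import all_boot all_order all_algebra.
From mathcomp Require Import all_classical all_reals all_analysis.
Set Implicit Arguments. Unset Strict Implicit. Unset Printing Implicit Defensive.
Import Order.TTheory GRing.Theory Num.Theory.
Import numFieldNormedType.Exports.
Local Open Scope classical_set_scope.
Local Open Scope ring_scope.

(* Weight vectors lambda in R^p are row vectors 'rV[R]_p; index k : 'I_p
   stands for the paper's k in [1,p]. *)

Definition is_distr (R : realType) (X : finType) (P : X -> R) : Prop :=
  (forall x, 0 <= P x) /\ \sum_(x : X) P x = 1.

Definition simplex (R : realType) (p : nat) : set 'rV[R]_p :=
  [set l | (forall k, 0 <= l ord0 k) /\ \sum_(k < p) l ord0 k = 1].

Definition l1norm (R : realType) (p : nat) (l : 'rV[R]_p) : R :=
  \sum_(k < p) `|l ord0 k|.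

Definition convexR (R : realType) (p : nat) (A : set 'rV[R]_p) : Prop :=
  forall a b (t : R), A a -> A b -> 0 <= t -> t <= 1 ->
    A (t *: a + (1 - t) *: b).

Definition mixture (R : realType) (X : finType) (p : nat)
  (phat : 'I_p -> X -> R) (l : 'rV[R]_p) (x : X) : R :=
  \sum_(k < p) l ord0 k * phat k x.

Definition is_gate (R : realType) (X : finType) (p : nat)
  (g : X -> 'I_p -> R) : Prop :=
  forall x, (forall k, 0 <= g x k <= 1) /\ \sum_(k < p) g x k = 1.

Definition pi_g (R : realType) (X : finType) (p : nat)
  (pihat : 'I_p -> X -> R) (g : X -> 'I_p -> R) (x : X) : R :=
  \sum_(k < p) g x k * pihat k x.

Definition Z_g (R : realType) (X : finType) (p : nat)
  (pihat : 'I_p -> X -> R) (g : X -> 'I_p -> R) : R :=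
  \sum_(x : X) pi_g pihat g x.

Definition G1 (R : realType) (X : finType) (p : nat)
  (pihat : 'I_p -> X -> R) : set (X -> 'I_p -> R) :=
  [set g | is_gate g /\ Z_g pihat g = 1].

Definition KL_term (R : realType) (a q : R) : \bar R :=
  if a == 0 then 0%E
  else if q == 0 then +oo%E
  else (a * ln (a / q))%:E.

Definition KL (R : realType) (X : finType) (P Q : X -> R) : \bar R :=
  (\sum_(x : X) KL_term (P x) (Q x))%E.

Definition worstKL (R : realType) (X : finType) (p : nat)
  (phat pihat : 'I_p -> X -> R) (A : set 'rV[R]_p) (g : X -> 'I_p -> R)
  : \bar R :=
  ereal_sup [set KL (mixture phat l) (pi_g pihat g) | l in A].

Definition Vstar (R : realType) (X : finType) (p : nat)
  (phat pihat : 'I_p -> X -> R) (A : set 'rV[R]_p) : \bar R :=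
  ereal_inf [set worstKL phat pihat A g | g in G1 pihat].

Definition dH (R : realType) (p : nat) (Lam Del : set 'rV[R]_p) : \bar R :=
  ereal_sup [set ereal_inf [set (l1norm (l - l'))%:E | l' in Lam]
            | l in Del].

(* Every divergence D_KL(p_lambda || pi_g) with g in G_1 is nonnegative by
   Gibbs' inequality, since both arguments have total mass 1, and it is bounded
   on the simplex (of l1-diameter 2) by Lipschitz continuity; as the uniform
   gate lies in G_1, all the values V*_A involved are finite. Shrinking Delta
   to Lam can only lower the worst case, whence the left inequality. For the
   right one fix g: every lambda in Delta lies within d_H(Lam, Delta) of Lam,
   so Lipschitz continuity lets the worst case over Delta exceed the worst case
   over Lam by at most L d_H; then take the infimum over g. *)

From mathcomp Require Import all_boot all_order all_algebra.
From mathcomp Require Import all_classical all_reals all_analysis.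
From mathcomp Require Import lra.
Set Implicit Arguments. Unset Strict Implicit. Unset Printing Implicit Defensive.
Import Order.TTheory GRing.Theory Num.Theory.
Import numFieldNormedType.Exports.
Local Open Scope classical_set_scope.
Local Open Scope ring_scope.

Lemma ln_le_subr1 (R : realType) (x : R) : 0 < x -> ln x <= x - 1.
Proof.
move=> x_gt0; have := expR_ge1Dx (ln x).
by rewrite lnK ?posrE // lerBrDl.
Qed.

Lemma KL_term_ge_subr (R : realType) (a q : R) : 0 <= a -> 0 <= q ->
  ((a - q)%:E <= KL_term a q)%E.
Proof.
move=> a_ge0 q_ge0; rewrite /KL_term.
have [->|a_neq0] := eqVneq a 0; first by rewrite lee_fin sub0r oppr_le0.
have [->|q_neq0] := eqVneq q 0; first by rewrite leey.
have a_gt0 : 0 < a by rewrite lt_def a_neq0.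
have q_gt0 : 0 < q by rewrite lt_def q_neq0.
have := ln_le_subr1 (divr_gt0 q_gt0 a_gt0).
rewrite lee_fin !ln_div ?posrE // => ln_le.
have : a * (ln q - ln a) <= a * (q / a - 1) by rewrite ler_wpM2l.
have -> : a * (q / a - 1) = q - a.
  by rewrite mulrBr mulr1 mulrCA divff ?mulr1 ?lt0r_neq0.
rewrite mulrBr [in X in _ -> X]mulrBr; lra.
Qed.

Lemma KL_ge_subr (R : realType) (X : finType) (P Q : X -> R) :
  (forall x, 0 <= P x) -> (forall x, 0 <= Q x) ->
  ((\sum_x P x - \sum_x Q x)%:E <= KL P Q)%E.
Proof.
move=> P_ge0 Q_ge0; rewrite /KL -sumrB -sumEFin.
by apply: lee_sum => x _; apply: KL_term_ge_subr.
Qed.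

Lemma KL_ge0 (R : realType) (X : finType) (P Q : X -> R) :
  (forall x, 0 <= P x) -> (forall x, 0 <= Q x) ->
  \sum_x Q x <= \sum_x P x -> (0 <= KL P Q)%E.
Proof.
move=> P_ge0 Q_ge0 QleP; apply: le_trans (KL_ge_subr P_ge0 Q_ge0).
by rewrite lee_fin subr_ge0.
Qed.

Lemma l1norm_ge0 (R : realType) (p : nat) (l : 'rV[R]_p) : 0 <= l1norm l.
Proof. by apply: sumr_ge0 => k _. Qed.

Lemma l1norm_simplex_le2 (R : realType) (p : nat) (l l' : 'rV[R]_p) :
  simplex l -> simplex l' -> l1norm (l - l') <= 2.
Proof.
move=> [l_ge0 l_sum1] [l'_ge0 l'_sum1].
have -> : (2 : R) = \sum_(k < p) (l ord0 k + l' ord0 k).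
  by rewrite big_split /= l_sum1 l'_sum1.
apply: ler_sum => k _; rewrite !mxE.
by rewrite (le_trans (ler_normB _ _)) // !ger0_norm.
Qed.

Lemma dH_simplex_fin_num (R : realType) (p : nat) (Lam : set 'rV[R]_p) :
  Lam `<=` @simplex R p -> Lam !=set0 -> dH Lam (@simplex R p) \is a fin_num.
Proof.
move=> LamS [l0 Lam_l0]; rewrite ge0_fin_numE; last first.
  apply: le_trans (ereal_sup_ubound _); last by exists l0; [exact: LamS|].
  by apply: le_ereal_inf_tmp => _ [l' _ <-]; rewrite lee_fin l1norm_ge0.
apply: le_lt_trans (ltry 2); apply: ge_ereal_sup => _ [l Sl <-].
apply: ge_ereal_inf; exists (l1norm (l - l0))%:E; first by exists l0.
by rewrite lee_fin l1norm_simplex_le2 //; exact: LamS.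
Qed.

Lemma lipschitz_ubound_near (R : realType) (T : Type) (S A : set T)
    (f : T -> R) (d : T -> T -> R) (L W D : R) :
  0 <= L -> A `<=` S -> A !=set0 ->
  (forall l l', S l -> S l' -> f l - f l' <= L * d l l') ->
  (forall l', A l' -> f l' <= W) ->
  (forall l, S l -> (ereal_inf [set (d l l')%:E | l' in A] <= D%:E)%E) ->
  forall l, S l -> f l <= W + L * D.
Proof.
move=> L_ge0 AS [l0 A_l0] f_lip f_le dist_le l Sl.
have near_bound l' : A l' -> f l - W <= L * d l l'.
  move=> A_l'; have := f_lip l l' Sl (AS _ A_l'); have := f_le l' A_l'; lra.
have [L0|L_neq0] := eqVneq L 0.
  by have := near_bound l0 A_l0; rewrite L0 !mul0r addr0 subr_le0.
have L_gt0 : 0 < L by rewrite lt_def L_neq0.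
suff : (f l - W) / L <= D by rewrite ler_pdivrMr // mulrC; lra.
rewrite -lee_fin; apply: le_trans (dist_le l Sl).
apply: le_ereal_inf_tmp => _ [l' A_l' <-].
by rewrite lee_fin ler_pdivrMr // mulrC near_bound.
Qed.

Section MixtureGate.
Variables (R : realType) (p : nat) (X : finType) (phat pihat : 'I_p -> X -> R).
Hypotheses (phat_distr : forall k, is_distr (phat k))
           (pihat_distr : forall k, is_distr (pihat k)).

Local Notation Delta := (@simplex R p).
Local Notation KLg g l := (KL (mixture phat l) (pi_g pihat g)).
Local Notation worst := (worstKL phat pihat).
Local Notation V := (Vstar phat pihat).

Lemma mixture_ge0 l : Delta l -> forall x, 0 <= mixture phat l x.
Proof.
move=> [l_ge0 _] x; apply: sumr_ge0 => k _.
by apply: mulr_ge0 => //; case: (phat_distr k).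
Qed.

Lemma mixture_sum1 l : Delta l -> \sum_x mixture phat l x = 1.
Proof.
move=> [_ l_sum1]; rewrite /mixture exchange_big /= -l_sum1.
apply: eq_bigr => k _; rewrite -mulr_sumr.
by case: (phat_distr k) => _ ->; rewrite mulr1.
Qed.

Lemma pi_g_ge0 g : is_gate g -> forall x, 0 <= pi_g pihat g x.
Proof.
move=> gate_g x; apply: sumr_ge0 => k _; apply: mulr_ge0.
  by case: (gate_g x) => /(_ k) /andP[].
by case: (pihat_distr k).
Qed.

Lemma KL_mixture_ge0 g l : G1 pihat g -> Delta l -> (0 <= KLg g l)%E.
Proof.
move=> [gate_g Z1] Dl; apply: KL_ge0; [exact: mixture_ge0|exact: pi_g_ge0|].
by rewrite mixture_sum1 // -/(Z_g pihat g) Z1.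
Qed.

Lemma uniform_gate_G1 : (0 < p)%N -> G1 pihat (fun _ _ => p%:R^-1).
Proof.
move=> p_gt0; have p_pos : (0 : R) < p%:R by rewrite ltr0n.
have sum_unif : \sum_(k < p) (p%:R^-1 : R) = 1.
  by rewrite sumr_const card_ord -(mulr_natr p%:R^-1) mulVf ?gt_eqF.
split.
  move=> x; split=> // k.
  by rewrite invr_ge0 (ltW p_pos) /= invf_le1 // ler1n.
rewrite /Z_g /pi_g exchange_big /= -[X in _ = X]sum_unif; apply: eq_bigr => k _.
by rewrite -mulr_sumr; case: (pihat_distr k) => _ ->; rewrite mulr1.
Qed.

Lemma worstKL_subset A B g : A `<=` B -> (worst A g <= worst B g)%E.
Proof. by move=> AB; apply: ereal_sup_le => _ [l Al <-]; exists l => //; exact: AB. Qed.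

Lemma Vstar_subset A B : A `<=` B -> (V A <= V B)%E.
Proof.
move=> AB; apply: le_ereal_inf_tmp => _ [g Gg <-].
apply: le_trans (worstKL_subset g AB); apply: ereal_inf_lbound; by exists g.
Qed.

Variable L : R.
Hypothesis L_ge0 : 0 <= L.
Hypothesis KL_fin_lipschitz : forall g, G1 pihat g ->
  (forall l, Delta l -> KLg g l \is a fin_num) /\
  (forall l l', Delta l -> Delta l' ->
     `| fine (KLg g l) - fine (KLg g l') | <= L * l1norm (l - l')).

Lemma KL_lipschitz g l l' : G1 pihat g -> Delta l -> Delta l' ->
  fine (KLg g l) - fine (KLg g l') <= L * l1norm (l - l').
Proof.
move=> Gg Dl Dl'; have [_ lip] := KL_fin_lipschitz Gg.
by have := lip l l' Dl Dl'; rewrite ler_norml => /andP[].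
Qed.

Lemma worstKL_fin_num A g : A `<=` Delta -> A !=set0 -> G1 pihat g ->
  worst A g \is a fin_num.
Proof.
move=> AD [l0 A_l0] Gg; have D_l0 := AD _ A_l0.
have [KL_fin _] := KL_fin_lipschitz Gg.
rewrite ge0_fin_numE; last first.
  apply: le_trans (KL_mixture_ge0 Gg D_l0) _.
  by apply: ereal_sup_ubound; exists l0.
apply: le_lt_trans (worstKL_subset g AD) _.
apply: le_lt_trans (ltry (fine (KLg g l0) + L * 2)).
apply: ge_ereal_sup => _ [l Dl <-]; rewrite -(fineK (KL_fin l Dl)) lee_fin.
have := KL_lipschitz Gg Dl D_l0.
have := ler_wpM2l L_ge0 (l1norm_simplex_le2 Dl D_l0); lra.
Qed.

Lemma Vstar_fin_num A : (0 < p)%N -> A `<=` Delta -> A !=set0 ->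
  V A \is a fin_num.
Proof.
move=> p_gt0 AD [l0 A_l0]; have G0 := uniform_gate_G1 p_gt0.
rewrite ge0_fin_numE; last first.
  apply: le_ereal_inf_tmp => _ [g Gg <-].
  apply: le_trans (KL_mixture_ge0 Gg (AD _ A_l0)) _.
  by apply: ereal_sup_ubound; exists l0.
apply: le_lt_trans (ereal_inf_lbound _) _; first by exists (fun _ _ => p%:R^-1).
by rewrite ltey_eq worstKL_fin_num //; exists l0.
Qed.

Lemma worstKL_simplex_le Lam g : Lam `<=` Delta -> Lam !=set0 -> G1 pihat g ->
  (worst Delta g <= worst Lam g + L%:E * dH Lam Delta)%E.
Proof.
move=> LamD Lam0 Gg; have [KL_fin _] := KL_fin_lipschitz Gg.
rewrite -(fineK (worstKL_fin_num LamD Lam0 Gg)) -(fineK (dH_simplex_fin_num LamD Lam0)).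
rewrite -EFinM -EFinD; apply: ge_ereal_sup => _ [l Dl <-].
rewrite -(fineK (KL_fin l Dl)) lee_fin.
apply: (@lipschitz_ubound_near _ _ Delta Lam (fun l => fine (KLg g l))
  (fun l l' => l1norm (l - l'))) => //.
- by move=> a b Da Db; exact: KL_lipschitz.
- move=> l' Lam_l'; have Dl' := LamD _ Lam_l'.
  rewrite -lee_fin !fineK ?KL_fin ?worstKL_fin_num //.
  by apply: ereal_sup_ubound; exists l'.
- move=> l'' Dl''; rewrite fineK ?dH_simplex_fin_num //.
  by apply: ereal_sup_ubound; exists l''.
Qed.

Lemma Vstar_simplex_le Lam : Lam `<=` Delta -> Lam !=set0 ->
  (V Delta <= V Lam + L%:E * dH Lam Delta)%E.
Proof.
move=> LamD Lam0; have dH_fin := dH_simplex_fin_num LamD Lam0.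
rewrite -leeBlDr ?fin_numM //; apply: le_ereal_inf_tmp => _ [g Gg <-].
rewrite leeBlDr ?fin_numM //; apply: le_trans (worstKL_simplex_le LamD Lam0 Gg).
by apply: ereal_inf_lbound; exists g.
Qed.

End MixtureGate.

Theorem mainTheorem7 (R : realType) (p : nat) (X : finType)
  (phat pihat : 'I_p -> X -> R) (Lam : set 'rV[R]_p) (L : R) :
  (0 < p)%N ->
  (forall k, is_distr (phat k)) ->
  (forall k, is_distr (pihat k)) ->
  (* X is X_0, the union of the supports of the phat_k *)
  (forall x : X, exists k, 0 < phat k x) ->
  Lam `<=` @simplex R p -> Lam !=set0 -> closed Lam -> convexR Lam ->
  0 <= L ->
  (forall g, G1 pihat g ->
     (forall l, @simplex R p l -> KL (mixture phat l) (pi_g pihat g) \is a fin_num) /\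
     (forall l l', @simplex R p l -> @simplex R p l' ->
        `| fine (KL (mixture phat l) (pi_g pihat g))
           - fine (KL (mixture phat l') (pi_g pihat g)) | <= L * l1norm (l - l'))) ->
  (0 <= Vstar phat pihat (@simplex R p) - Vstar phat pihat Lam)%E /\
  (Vstar phat pihat (@simplex R p) - Vstar phat pihat Lam
     <= L%:E * dH Lam (@simplex R p))%E.
Proof.
move=> p_gt0 phat_distr pihat_distr _ LamD Lam0 _ _ L_ge0 KL_fin_lip.
have VLam_fin := Vstar_fin_num phat_distr pihat_distr L_ge0 KL_fin_lip p_gt0 LamD Lam0.
split; first by rewrite sube_ge0 ?VLam_fin // Vstar_subset.
by rewrite leeBlDl // (Vstar_simplex_le phat_distr pihat_distr L_ge0 KL_fin_lip).

Qed.
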